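(* Let $\mathbf{U}$ be a countable structure that has a universal homogeneous endomorphism. Then $\mathbf{U}$ is homogeneous if and only if $\mathbf{U}$ is homomorphism homogeneous.
   Context: An embedding is an injective homomorphism reflecting all relations. $\operatorname{Age}(\mathbf{U})$ is the class of finitely generated structures embeddable in $\mathbf{U}$, and $\overline{\operatorname{Age}(\mathbf{U})}$ is the class of countable structures all of whose finitely generated substructures embed into $\mathbf{U}$. A structure is homogeneous if every isomorphism between finitely generated substructures extends to an automorphism, and homomorphism homogeneous if every homomorphism between finitely generated substructures extends to an endomorphism. A universal homogeneous endomorphism of $\mathbf{U}$ is an endomorphism $u$ such that for every $\mathbf{A}\in\overline{\operatorname{Age}(\mathbf{U})}$ and homomorphism $h:\mathbf{A}\to\mathbf{U}$ there is an embedding $\iota:\mathbf{A}\hookrightarrow\mathbf{U}$ with $h=u\circ\iota$, and for every finitely generated $\mathbf{A}\le\mathbf{U}$ and embedding $\iota:\mathbf{A}\hookrightarrow\mathbf{U}$ with $u\circ\iota=u\restriction_A$ there is an automorphism $\alpha$ of $\mathbf{U}$ with $u\circ\alpha=u$ and $\alpha\restriction_A=\iota$. *)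

From mathcomp Require Import all_boot.
Set Implicit Arguments. Unset Strict Implicit. Unset Printing Implicit Defensive.

Record signature := Signature {
  fsym : Type; farity : fsym -> nat;
  rsym : Type; rarity : rsym -> nat }.

Record structure (S : signature) := Structure {
  carrier :> Type;
  fun_of : forall f : fsym S, ('I_(farity f) -> carrier) -> carrier;
  rel_of : forall r : rsym S, ('I_(rarity r) -> carrier) -> Prop }.

Arguments fun_of {S s} f _.
Arguments rel_of {S s} r _.

Section Defs.
Variable S : signature.

Definition countable (A : structure S) : Prop :=
  exists c : A -> nat, injective c.

Definition is_hom (A B : structure S) (h : A -> B) : Prop :=
  (forall f a, h (fun_of f a) = fun_of f (h \o a)) /\
  (forall r a, rel_of r a -> rel_of r (h \o a)).

Definition is_embedding (A B : structure S) (h : A -> B) : Prop :=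
  injective h /\
  (forall f a, h (fun_of f a) = fun_of f (h \o a)) /\
  (forall r a, rel_of r a <-> rel_of r (h \o a)).

Definition is_auto (A : structure S) (h : A -> A) : Prop :=
  is_embedding h /\ (forall y, exists x, h x = y).

Inductive generated (A : structure S) (X : A -> Prop) : A -> Prop :=
| gen_base x : X x -> generated X x
| gen_app f (a : 'I_(farity f) -> A) :
    (forall i, generated X (a i)) -> generated X (fun_of f a).

Definition fg_sub (A : structure S) (P : A -> Prop) : Prop :=
  exists n (g : 'I_n -> A),
    forall x, P x <-> generated (fun y => exists i, g i = y) x.

(* Maps defined on a substructure P of A (represented by total maps A -> B whose
   values outside P are irrelevant); P carries the induced structure. *)
Definition hom_on (A B : structure S) (P : A -> Prop) (h : A -> B) : Prop :=
  (forall f a, (forall i, P (a i)) -> h (fun_of f a) = fun_of f (h \o a)) /\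
  (forall r a, (forall i, P (a i)) -> rel_of r a -> rel_of r (h \o a)).

Definition emb_on (A B : structure S) (P : A -> Prop) (h : A -> B) : Prop :=
  (forall x y, P x -> P y -> h x = h y -> x = y) /\
  (forall f a, (forall i, P (a i)) -> h (fun_of f a) = fun_of f (h \o a)) /\
  (forall r a, (forall i, P (a i)) -> (rel_of r a <-> rel_of r (h \o a))).

Definition hom_between (U : structure S) (P Q : U -> Prop) (h : U -> U) : Prop :=
  hom_on P h /\ (forall x, P x -> Q (h x)).

Definition iso_between (U : structure S) (P Q : U -> Prop) (h : U -> U) : Prop :=
  emb_on P h /\ (forall x, P x -> Q (h x)) /\
  (forall y, Q y -> exists x, P x /\ h x = y).

Definition homogeneous (U : structure S) : Prop :=
  forall (P Q : U -> Prop) (h : U -> U), fg_sub P -> fg_sub Q ->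
    iso_between P Q h ->
    exists alpha : U -> U, is_auto alpha /\ (forall x, P x -> alpha x = h x).

Definition hom_homogeneous (U : structure S) : Prop :=
  forall (P Q : U -> Prop) (h : U -> U), fg_sub P -> fg_sub Q ->
    hom_between P Q h ->
    exists g : U -> U, is_hom g /\ (forall x, P x -> g x = h x).

Definition in_age_closure (U A : structure S) : Prop :=
  countable A /\
  (forall P : A -> Prop, fg_sub P -> exists e : A -> U, emb_on P e).

Definition universal_homogeneous_endo (U : structure S) (u : U -> U) : Prop :=
  is_hom u /\
  (forall (A : structure S), in_age_closure U A ->
     forall h : A -> U, is_hom h ->
       exists iota : A -> U, is_embedding iota /\ (forall x, h x = u (iota x))) /\
  (forall P : U -> Prop, fg_sub P ->
     forall iota : U -> U, emb_on P iota -> (forall x, P x -> u (iota x) = u x) ->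
       exists alpha : U -> U, is_auto alpha /\ (forall x, u (alpha x) = u x) /\
         (forall x, P x -> alpha x = iota x)).

End Defs.

From mathcomp Require Import all_boot.
From Stdlib Require Import ClassicalEpsilon ProofIrrelevance FunctionalExtensionality.

Set Implicit Arguments. Unset Strict Implicit. Unset Printing Implicit Defensive.

(* (=>) Let h be a homomorphism between finitely generated substructures P, Q.
   Viewing P as a structure in its own right, it lies in the closure of the age
   of U, so by universality h = u o iota for an embedding iota of P into U.
   Then iota is an isomorphism between finitely generated substructures, which
   homogeneity extends to an automorphism alpha; u o alpha extends h.

   (<=) Homomorphism homogeneity together with u yields the extension property:
   every finite partial isomorphism extends to a self-embedding of U (extend it
   to an endomorphism g, factor u o g = u o iota, and use the homogeneity of u
   to correct iota into an embedding that agrees with h).  Hence finite partial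
   isomorphisms can be extended forth (to include a given point in the domain)
   and, applying this to inverses, back.  A back-and-forth construction along an
   enumeration of the countable U then extends any finite partial isomorphism
   to an automorphism. *)

Section Substructures.
Variables (S : signature) (A : structure S).

Definition op_closed (P : A -> Prop) : Prop :=
  forall f (a : 'I_(farity f) -> A), (forall i, P (a i)) -> P (fun_of f a).

Definition img (P : A -> Prop) (k : A -> A) : A -> Prop :=
  fun y => exists x, P x /\ k x = y.

Lemma generated_mono (X Y : A -> Prop) :
  (forall x, X x -> Y x) -> forall x, generated X x -> generated Y x.
Proof.
move=> XY x; elim=> [y /XY | f a _ IH]; [exact: gen_base | exact: gen_app].
Qed.

Lemma fg_op_closed (P : A -> Prop) : fg_sub P -> op_closed P.
Proof. by move=> [n [g Pg]] f a Pa; apply/Pg/gen_app => i; apply/Pg. Qed.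

Lemma img_generated (X P : A -> Prop) (k : A -> A) :
  (forall y, generated X y -> P y) ->
  (forall f a, (forall i, P (a i)) -> k (fun_of f a) = fun_of f (k \o a)) ->
  forall y, img (generated X) k y <-> generated (img X k) y.
Proof.
move=> genP kf y; split.
- move=> [x [Xx <-]]; elim: Xx => [z Xz | f a Xa IH].
  + by apply: gen_base; exists z.
  + rewrite kf; last by move=> i; apply/genP/Xa.
    exact: gen_app.
- elim=> [z [x [Xx <-]] | f a _ IH].
  + by exists x; split; first exact: gen_base.
  + have [b Hb] : exists b : 'I_(farity f) -> A,
        forall i, generated X (b i) /\ k (b i) = a i.
      by apply: (choice (fun i x => generated X x /\ k x = a i)) => i;
        have [x] := IH i; exists x.
    exists (fun_of f b); split; first by apply: gen_app => i; case: (Hb i).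
    rewrite kf; last by move=> i; apply/genP; case: (Hb i).
    by congr (fun_of f _); apply: functional_extensionality => i /=; case: (Hb i).
Qed.

Lemma fg_img (P : A -> Prop) (k : A -> A) : fg_sub P ->
  (forall f a, (forall i, P (a i)) -> k (fun_of f a) = fun_of f (k \o a)) ->
  fg_sub (img P k).
Proof.
move=> [n [g Pg]] kf; exists n, (k \o g) => y.
have genP y' : generated (fun z => exists i, g i = z) y' -> P y' by move/Pg.
have imgP : img P k y <-> img (generated (fun z => exists i, g i = z)) k y.
  by split=> -[x [Px <-]]; exists x; split=> //; apply/Pg.
rewrite imgP (img_generated genP kf); split; apply: generated_mono.
- by move=> w [x [[i <-] <-]]; exists i.
- by move=> w [i <-]; exists (g i); split=> //; exists i.
Qed.

Lemma fg_adjoin (P : A -> Prop) (x : A) : fg_sub P ->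
  exists P', fg_sub P' /\ (forall y, P y -> P' y) /\ P' x.
Proof.
move=> [n [g Pg]].
pose g' (i : 'I_n.+1) := if unlift ord_max i is Some j then g j else x.
exists (generated (fun y => exists i, g' i = y)); split; last split.
- by exists n.+1, g'.
- move=> y /Pg; apply: generated_mono => _ [i <-].
  by exists (lift ord_max i); rewrite /g' liftK.
- by apply: gen_base; exists ord_max; rewrite /g' unlift_none.
Qed.

End Substructures.

Section PartialInverse.
Variables (S : signature) (A : structure S).

Definition pinv (P : A -> Prop) (k : A -> A) (y : A) : A :=
  match excluded_middle_informative (img P k y) with
  | left H => proj1_sig (constructive_indefinite_description _ H)
  | right _ => y
  end.

Lemma pinv_spec (P : A -> Prop) (k : A -> A) y :
  img P k y -> P (pinv P k y) /\ k (pinv P k y) = y.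
Proof.
rewrite /pinv; case: excluded_middle_informative => // H _.
exact: proj2_sig (constructive_indefinite_description _ H).
Qed.

Lemma pinvK (P : A -> Prop) (k : A -> A) x :
  (forall x y, P x -> P y -> k x = k y -> x = y) -> P x -> pinv P k (k x) = x.
Proof.
move=> kinj Px; have [Pp kp] := pinv_spec (y := k x) (ex_intro _ x (conj Px erefl)).
exact: kinj.
Qed.

Lemma img_tuple (P : A -> Prop) (k : A -> A) n (a : 'I_n -> A) :
  (forall i, img P k (a i)) ->
  (forall i, P (pinv P k (a i))) /\ a = k \o (pinv P k \o a).
Proof.
move=> Ha; split; first by move=> i; case: (pinv_spec (Ha i)).
by apply: functional_extensionality => i /=; case: (pinv_spec (Ha i)).
Qed.

(* With h = id this says
   that inverses of partial isomorphisms are partial isomorphisms. *)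
Lemma emb_on_transport (P : A -> Prop) (k h : A -> A) :
  op_closed P -> emb_on P k -> emb_on P h -> emb_on (img P k) (h \o pinv P k).
Proof.
move=> Pcl [kinj [kf kr]] [hinj [hf hr]].
have K p : P p -> pinv P k (k p) = p by apply: pinvK.
split; last split.
- by move=> _ _ [p1 [P1 <-]] [p2 [P2 <-]] /=; rewrite !K // => /hinj ->.
- move=> f a /img_tuple [Pb ->].
  rewrite -kf //= K; last exact: Pcl.
  rewrite hf //; congr (fun_of f _).
  by apply: functional_extensionality => i /=; rewrite K.
- move=> r a /img_tuple [Pb ->].
  have -> : h \o pinv P k \o (k \o (pinv P k \o a)) = h \o (pinv P k \o a).
    by apply: functional_extensionality => i /=; rewrite K.
  by rewrite -kr // hr.
Qed.

End PartialInverse.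

Section Morphisms.
Variable S : signature.

Lemma hom_comp (A B C : structure S) (f : A -> B) (g : B -> C) :
  is_hom f -> is_hom g -> is_hom (g \o f).
Proof.
move=> [ff fr] [gf gr]; split; first by move=> F a /=; rewrite ff gf.
by move=> r a /fr /gr.
Qed.

Lemma embedding_hom (A B : structure S) (f : A -> B) : is_embedding f -> is_hom f.
Proof. by move=> [_ [ff fr]]; split=> // r a /fr. Qed.

Lemma embedding_comp (A B C : structure S) (f : A -> B) (g : B -> C) :
  is_embedding f -> is_embedding g -> is_embedding (g \o f).
Proof.
move=> [finj [ff fr]] [ginj [gf gr]]; split; last split.
- by move=> x y /ginj /finj.
- by move=> F a /=; rewrite ff gf.
- by move=> r a; rewrite fr gr.
Qed.

Lemma embedding_emb_on (A B : structure S) (P : A -> Prop) (f : A -> B) :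
  is_embedding f -> emb_on P f.
Proof. by move=> [finj [ff fr]]; split; last split; auto. Qed.

Lemma id_emb_on (A : structure S) (P : A -> Prop) : emb_on P id.
Proof. by split. Qed.

Lemma age_closure_self (U : structure S) : countable U -> in_age_closure U U.
Proof. by move=> cU; split=> // P _; exists id; apply: id_emb_on. Qed.

End Morphisms.

Section ExtensionProperty.
Variables (S : signature) (U : structure S) (u : U -> U).
Hypotheses (cU : countable U) (uhe : universal_homogeneous_endo u)
  (hhU : hom_homogeneous U).

Lemma partial_iso_extends (P : U -> Prop) (h : U -> U) :
  fg_sub P -> emb_on P h ->
  exists e, is_embedding e /\ forall p, P p -> e p = h p.
Proof.
move=> fgP hemb; have [u_hom [u_univ u_homog]] := uhe.
have fg_img_h : fg_sub (img P h) by apply: fg_img => // f a; apply: hemb.2.1.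
have [g [g_hom gh]] : exists g, is_hom g /\ forall p, P p -> g p = h p.
  apply: hhU fgP fg_img_h _; split; last by move=> x Px; exists x.
  by case: hemb => _ [hf hr]; split=> // r a Pa /(hr r a Pa).
(* u o g factors through an embedding iota of U; then h o iota^-1 is a partial
   isomorphism on iota(P) fixed by u, which u extends to an automorphism. *)
have [iota [iota_emb u_iota]] :=
  u_univ U (age_closure_self cU) (u \o g) (hom_comp g_hom u_hom).
have iotaK p : P p -> pinv P iota (iota p) = p.
  by apply: pinvK => x y _ _; apply: iota_emb.1.
have j_emb : emb_on (img P iota) (h \o pinv P iota).
  exact: emb_on_transport (fg_op_closed fgP) (embedding_emb_on _ iota_emb) hemb.
have j_fixed x : img P iota x -> u ((h \o pinv P iota) x) = u x.
  by move=> [p [Pp <-]] /=; rewrite iotaK // -gh // -u_iota.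
have fg_iotaP : fg_sub (img P iota).
  by apply: fg_img => // f a _; apply: iota_emb.2.1.
have [alpha [[alpha_emb _] [_ alpha_j]]] := u_homog _ fg_iotaP _ j_emb j_fixed.
exists (alpha \o iota); split; first exact: embedding_comp iota_emb alpha_emb.
by move=> p Pp /=; rewrite alpha_j /=; [rewrite iotaK | exists p].
Qed.

Lemma forth (P : U -> Prop) (h : U -> U) x : fg_sub P -> emb_on P h ->
  exists P' h', [/\ fg_sub P', emb_on P' h', P' x &
    forall p, P p -> P' p /\ h' p = h p].
Proof.
move=> fgP hemb; have [e [e_emb eh]] := partial_iso_extends fgP hemb.
have [P' [fgP' [PP' P'x]]] := fg_adjoin x fgP.
exists P', e; split=> //; first exact: embedding_emb_on.
by move=> p Pp; split; [apply: PP' | apply: eh].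
Qed.

(* Back: a finite partial isomorphism extends to one whose image contains y;
   apply forth to the inverse and invert again. *)
Lemma back (P : U -> Prop) (h : U -> U) y : fg_sub P -> emb_on P h ->
  exists P' h', [/\ fg_sub P', emb_on P' h', img P' h' y &
    forall p, P p -> P' p /\ h' p = h p].
Proof.
move=> fgP hemb; have Pcl := fg_op_closed fgP.
have hK p : P p -> pinv P h (h p) = p by apply: pinvK; apply: hemb.1.
have fg_img_h : fg_sub (img P h) by apply: fg_img => // f a; apply: hemb.2.1.
have inv_emb := emb_on_transport Pcl hemb (id_emb_on P).
have [Q [k [fgQ kemb Qy kinv]]] := forth y fg_img_h inv_emb.
have hP p : P p -> Q (h p) /\ k (h p) = p.
  by move=> Pp; have [] := kinv (h p) (ex_intro _ p (conj Pp erefl)); rewrite /= hK.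
have kK q : Q q -> pinv Q k (k q) = q by apply: pinvK; apply: kemb.1.
exists (img Q k), (pinv Q k); split.
- by apply: fg_img => // f a; apply: kemb.2.1.
- exact: emb_on_transport (fg_op_closed fgQ) kemb (id_emb_on Q).
- by exists (k y); split; [exists y | rewrite kK].
- move=> p Pp; have [Qhp khp] := hP p Pp.
  by split; [exists (h p) | rewrite -{1}khp kK].
Qed.

End ExtensionProperty.

Section BackAndForth.
Variables (S : signature) (U : structure S) (c : U -> nat).
Hypothesis c_inj : injective c.

Definition pmap : Type := ((U -> Prop) * (U -> U))%type.

Definition finite_piso (s : pmap) : Prop := fg_sub s.1 /\ emb_on s.1 s.2.

Definition extends (s s' : pmap) : Prop :=
  forall p, s.1 p -> s'.1 p /\ s'.2 p = s.2 p.

Lemma extends_refl (s : pmap) : extends s s.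
Proof. by []. Qed.

Lemma extends_trans (s1 s2 s3 : pmap) :
  extends s1 s2 -> extends s2 s3 -> extends s1 s3.
Proof.
move=> e12 e23 p /e12 [p2 <-]; have [p3 ->] := e23 p p2; by split.
Qed.

Definition covers (s s' : pmap) (x : U) : Prop :=
  [/\ finite_piso s', s'.1 x, img s'.1 s'.2 x & extends s s'].

Hypothesis bf_step : forall s x, finite_piso s -> exists s', covers s s' x.

Definition next (s : pmap) (x : U) : pmap :=
  epsilon (inhabits s) (fun s' => covers s s' x).

Lemma next_covers (s : pmap) x : finite_piso s -> covers s (next s x) x.
Proof. by move=> /(bf_step x) ex; apply: (epsilon_spec (inhabits s) _ ex). Qed.

Definition decode (n : nat) : option U :=
  match excluded_middle_informative (exists x, c x = n) with
  | left H => Some (proj1_sig (constructive_indefinite_description _ H))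
  | right _ => None
  end.

Lemma decode_c x : decode (c x) = Some x.
Proof.
rewrite /decode; case: excluded_middle_informative => [H | []]; last by exists x.
by congr Some; apply: c_inj; apply: proj2_sig (constructive_indefinite_description _ H).
Qed.

Variable s0 : pmap.
Hypothesis s0_piso : finite_piso s0.

Fixpoint chain (n : nat) : pmap :=
  if n is m.+1 then
    if decode m is Some x then next (chain m) x else chain m
  else s0.

Lemma chain_piso n : finite_piso (chain n).
Proof.
elim: n => [|n IH] //=; case: (decode n) => [x|] //.
by have [] := next_covers x IH.
Qed.

Lemma chain_extends n : extends (chain n) (chain n.+1).
Proof.
rewrite [chain n.+1]/=; case: (decode n) => [x|]; last exact: extends_refl.
by have [] := next_covers x (chain_piso n).
Qed.

Lemma chain_mono m n : m <= n -> extends (chain m) (chain n).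
Proof.
move=> /subnKC <-; elim: (n - m) => [|k IH]; first by rewrite addn0.
by rewrite addnS; apply: extends_trans IH (chain_extends (n := m + k)).
Qed.

Lemma chain_covers x :
  (chain (c x).+1).1 x /\ img (chain (c x).+1).1 (chain (c x).+1).2 x.
Proof.
rewrite [chain _.+1]/= decode_c.
by have [] := next_covers x (chain_piso (c x)).
Qed.

(* The limit map: its value at x is fixed from stage (c x).+1 on. *)
Definition chain_limit (x : U) : U := (chain (c x).+1).2 x.

Lemma chain_limit_agrees n x : (chain n).1 x -> chain_limit x = (chain n).2 x.
Proof.
move=> xn; rewrite /chain_limit; case: (leqP (c x).+1 n) => [le_xn | /ltnW le_nx].
- by have [_ ->] := chain_mono le_xn (chain_covers x).1.
- by have [_ ->] := chain_mono le_nx xn.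
Qed.

Lemma chain_bound n (a : 'I_n -> U) : exists m, forall i, (chain m).1 (a i).
Proof.
exists (\max_i (c (a i)).+1) => i.
by have [] := chain_mono (@leq_bigmax _ (fun i => (c (a i)).+1) i) (chain_covers (a i)).1.
Qed.

(* The limit of the chain is an automorphism: any finitely many points are
   handled inside a single finite partial isomorphism, and every point is
   eventually in the image. *)
Lemma chain_limit_auto : is_auto chain_limit.
Proof.
split; last first.
  move=> y; have [_ [x [xdom <-]]] := chain_covers y.
  by exists x; rewrite (chain_limit_agrees xdom).
have agree_tuple n (a : 'I_n -> U) m : (forall i, (chain m).1 (a i)) ->
    chain_limit \o a = (chain m).2 \o a.
  by move=> am; apply: functional_extensionality => i /=; apply: chain_limit_agrees.
split; last split.
- move=> x y; have [m xym] := chain_bound (fun i : 'I_2 => if i == ord0 then x else y).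
  have xm := xym ord0; have ym := xym (lift ord0 ord0); rewrite /= in xm ym.
  rewrite (chain_limit_agrees xm) (chain_limit_agrees ym).
  by apply: (chain_piso m).2.1.
- move=> f a; have [m am] := chain_bound a.
  have [fgm [_ [mf _]]] := chain_piso m.
  rewrite (chain_limit_agrees (fg_op_closed fgm am)) mf //.
  by rewrite (agree_tuple _ _ _ am).
- move=> r a; have [m am] := chain_bound a.
  by rewrite (agree_tuple _ _ _ am); apply: (chain_piso m).2.2.2.
Qed.

Lemma chain_limit_extends x : s0.1 x -> chain_limit x = s0.2 x.
Proof. by move=> x0; rewrite (chain_limit_agrees (n := 0)). Qed.

End BackAndForth.

Section InducedSubstructure.
Variables (S : signature) (U : structure S) (P : U -> Prop).
Hypothesis P_closed : op_closed P.

Definition induced : structure S :=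
  @Structure S {x : U | P x}
    (fun f a => exist _ (fun_of f (fun i => proj1_sig (a i)))
                  (P_closed (fun i => proj2_sig (a i))))
    (fun r a => rel_of r (fun i => proj1_sig (a i))).

Lemma induced_val_inj : injective (fun x : induced => proj1_sig x).
Proof. by move=> x y; apply: eq_sig_hprop => z; apply: proof_irrelevance. Qed.

Lemma induced_in_age_closure : countable U -> in_age_closure U induced.
Proof.
move=> [c c_inj]; split.
- by exists (fun x : induced => c (proj1_sig x)) => x y /c_inj /induced_val_inj.
- move=> Q _; exists (fun x : induced => proj1_sig x); split=> //.
  by move=> x y _ _ /induced_val_inj.
Qed.

Lemma induced_hom (h : U -> U) :
  hom_on P h -> is_hom (fun x : induced => h (proj1_sig x)).
Proof.
move=> [hf hr]; split.
- by move=> f a /=; apply: hf => i; apply: proj2_sig.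
- by move=> r a /hr; apply=> i; apply: proj2_sig.
Qed.

Lemma induced_embedding (iota : induced -> U) : is_embedding iota ->
  exists k : U -> U, emb_on P k /\ forall x (Px : P x), k x = iota (exist _ x Px).
Proof.
move=> [iinj [iota_ops iota_rels]].
pose k x := if excluded_middle_informative (P x) is left Px
            then iota (exist _ x Px) else x.
have kE x (Px : P x) : k x = iota (exist _ x Px).
  rewrite /k; case: excluded_middle_informative => // Px'.
  by congr iota; apply: induced_val_inj.
have k_tuple n (a : 'I_n -> U) (Pa : forall i, P (a i)) :
    k \o a = iota \o (fun i => exist P (a i) (Pa i)).
  by apply: functional_extensionality => i /=; rewrite kE.
exists k; split=> //; split; last split.
- by move=> x y Px Py; rewrite !kE => /iinj [].
- move=> f a Pa; rewrite (kE _ (P_closed Pa)) k_tuple -iota_ops.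
  by congr iota; apply: induced_val_inj.
- by move=> r a Pa; rewrite k_tuple -iota_rels.
Qed.

End InducedSubstructure.

Section Directions.
Variables (S : signature) (U : structure S) (u : U -> U).
Hypotheses (cU : countable U) (uhe : universal_homogeneous_endo u).

(* A homomorphism h between finitely generated substructures factors as u o iota
   with iota an embedding of the domain; homogeneity extends iota. *)
Lemma homogeneous_hom_homogeneous : homogeneous U -> hom_homogeneous U.
Proof.
move=> homU P Q h fgP _ [hhom _]; have [u_hom [u_univ _]] := uhe.
have Pcl := fg_op_closed fgP.
have [iota [iota_emb h_iota]] :=
  u_univ _ (induced_in_age_closure Pcl cU) _ (induced_hom Pcl hhom).
have [k [kemb kE]] := induced_embedding iota_emb.
have fg_img_k : fg_sub (img P k) by apply: fg_img => // f a; apply: kemb.2.1.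
have k_iso : iso_between P (img P k) k.
  by split=> //; split=> [x Px | y]; [exists x | case=> x []; exists x].
have [alpha [[alpha_emb _] alpha_k]] := homU _ _ _ fgP fg_img_k k_iso.
exists (u \o alpha); split; first exact: hom_comp (embedding_hom alpha_emb) u_hom.
by move=> x Px /=; rewrite alpha_k // (kE x Px) -h_iota.
Qed.

(* Forth and back make finite partial isomorphisms a back-and-forth system,
   so every isomorphism between finitely generated substructures extends to
   an automorphism. *)
Lemma hom_homogeneous_homogeneous : hom_homogeneous U -> homogeneous U.
Proof.
move=> hhU P Q h fgP _ [hemb [_ _]]; have [c c_inj] := cU.
have step (s : pmap U) (x : U) : finite_piso s -> exists s', covers s s' x.
  move=> [fg1 emb1].
  have [P1 [h1 [fgP1 emb1' P1x ext1]]] := forth cU uhe hhU x fg1 emb1.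
  have [P2 [h2 [fgP2 emb2 P2x ext2]]] := back cU uhe hhU x fgP1 emb1'.
  exists (P2, h2); split=> //=; first by have [] := ext2 x P1x.
  by move=> p /ext1 [/ext2 [P2p e21] e1] /=; rewrite e21 e1.
have s0_piso : finite_piso (P, h) by [].
exists (chain_limit c (P, h)); split.
  exact: chain_limit_auto c_inj step _ s0_piso.
by move=> x Px; apply: chain_limit_extends c_inj step _ s0_piso _ Px.
Qed.

End Directions.

Theorem proposition4p8 (S : signature) (U : structure S) :
  countable U ->
  (exists u : U -> U, universal_homogeneous_endo u) ->
  (homogeneous U <-> hom_homogeneous U).
Proof.
move=> cU [u uhe]; split.
- exact: homogeneous_hom_homogeneous cU uhe.
- exact: hom_homogeneous_homogeneous cU uhe.
Qed.
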